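(* Let $A_n$ be the set of binary words of length $n$ that contain no $3$-antipower as a factor, and let $k \geq 6$. Then \begin{itemize} \item $A_{3k} = \mathcal{C}_{3k}\left(0^* \cup (01)^* \cup (01)^* 0 \cup 0^*10^* \cup 0^*011 \cup 0^*101\right)$, \item $A_{3k+1} = \mathcal{C}_{3k+1}\left(0^* \cup (01)^* \cup (01)^* 0 \cup 0^*10^* \cup 0^*011 \cup 0^*101 \cup 10^*1\right)$, \item $A_{3k+2} = \mathcal{C}_{3k+2}\left(0^* \cup (01)^* \cup (01)^* 0 \cup 0^*10^* \cup 0^*011 \cup 0^*101 \cup 10^*1 \cup 10^*10 \cup 10^*11\right)$. \end{itemize} In particular, for $k \geq 6$ there are exactly $6k+12$ (resp. $6k+16$, $6k+26$) binary words of length $3k$ (resp. $3k+1$, $3k+2$) avoiding $3$-antipowers.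
   Context: Words are over $\{0,1\}$. A $3$-antipower is a word $u_1u_2u_3$ with $|u_1|=|u_2|=|u_3|$ and $u_1,u_2,u_3$ pairwise distinct; a factor is a contiguous subword; a word avoids $3$-antipowers if it has no $3$-antipower as a factor. For a word $w$, $w^* = \{\varepsilon, w, w^2, \dots\}$, and sets of words are written as regular expressions. For a language $L \subseteq \{0,1\}^*$, $\mathcal{C}_n(L)$ denotes the closure of $L \cap \{0,1\}^n$ under bitwise complementation (exchanging $0$ and $1$) and reversal; i.e., it consists of all length-$n$ words of $L$, their bitwise complements, their reversals, and the bitwise complements of their reversals. *)

From mathcomp Require Import all_boot.
Set Implicit Arguments. Unset Strict Implicit. Unset Printing Implicit Defensive.

(* Binary words: seq bool, with letter 0 = false and letter 1 = true. *)
Notation word := (seq bool).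

Definition factor (x w : word) : Prop := exists p s : word, w = p ++ x ++ s.

Definition antipower3 (x : word) : Prop :=
  exists u1 u2 u3 : word,
    x = u1 ++ u2 ++ u3 /\ size u1 = size u2 /\ size u2 = size u3 /\
    u1 <> u2 /\ u1 <> u3 /\ u2 <> u3.

Definition avoids_antipower3 (w : word) : Prop :=
  ~ (exists x, factor x w /\ antipower3 x).

Definition A (n : nat) (w : word) : Prop := size w = n /\ avoids_antipower3 w.

Definition compl (w : word) : word := map negb w.

Definition Cl (n : nat) (L : word -> Prop) (w : word) : Prop :=
  exists u : word, [/\ size u = n, L u &
    (w = u \/ w = compl u \/ w = rev u \/ w = compl (rev u))].

Definition L_0star (w : word) : Prop := exists a, w = nseq a false.
Definition L_01star (w : word) : Prop := exists m, w = flatten (nseq m [:: false; true]).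
Definition L_01star0 (w : word) : Prop :=
  exists m, w = flatten (nseq m [:: false; true]) ++ [:: false].
Definition L_0star10star (w : word) : Prop :=
  exists a b, w = nseq a false ++ true :: nseq b false.
Definition L_0star011 (w : word) : Prop :=
  exists a, w = nseq a false ++ [:: false; true; true].
Definition L_0star101 (w : word) : Prop :=
  exists a, w = nseq a false ++ [:: true; false; true].
Definition L_10star1 (w : word) : Prop :=
  exists a, w = true :: nseq a false ++ [:: true].
Definition L_10star10 (w : word) : Prop :=
  exists a, w = true :: nseq a false ++ [:: true; false].
Definition L_10star11 (w : word) : Prop :=
  exists a, w = true :: nseq a false ++ [:: true; true].

Definition L0 (w : word) : Prop :=
  L_0star w \/ L_01star w \/ L_01star0 w \/ L_0star10star w \/
  L_0star011 w \/ L_0star101 w.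
Definition L1 (w : word) : Prop := L0 w \/ L_10star1 w.
Definition L2 (w : word) : Prop := L1 w \/ L_10star10 w \/ L_10star11 w.

Definition has_card (P : word -> Prop) (N : nat) : Prop :=
  exists s : seq word, [/\ uniq s, size s = N & forall w, w \in s <-> P w].

From mathcomp Require Import all_boot zify.
Set Implicit Arguments. Unset Strict Implicit. Unset Printing Implicit Defensive.

(* Call a word of length n a candidate if it is alternating, or if its set of
   1s (or of 0s) is one of the explicit sparse supports of [sparse_support]
   (at most three positions).  For n = 12 the candidates are exactly the
   words avoiding 3-antipowers, by exhaustive computation.  A word of length
   n + 1 avoids 3-antipowers iff its prefix and suffix of length n do and it is
   not itself a 3-antipower.  By induction both are candidates; counting 1s
   shows that they have the same shape, and a finite case analysis on the
   positions of the 1s, linear in n, shows that the word is then a candidate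
   or an explicit 3-antipower, and conversely.  The candidates are finally
   identified with C_n(L) and counted: two alternating words, and twice
   n + 5 + [n mod 3 <> 0] + 4 [n mod 3 = 2] sparse words. *)

Implicit Types (w x s t u : word) (P Q : seq nat).

(** * Words as sets of positions *)

Definition support (w : word) : seq nat := [seq i <- iota 0 (size w) | nth false w i].

Definition indicator n (P : seq nat) : word := mkseq (mem P) n.

Lemma size_indicator n P : size (indicator n P) = n.
Proof. exact: size_mkseq. Qed.

Lemma nth_indicator n P i : nth false (indicator n P) i = (i < n) && (i \in P).
Proof.
by case: ltnP => [lt_in|le_ni]; [rewrite nth_mkseq | rewrite nth_default ?size_mkseq].
Qed.

Lemma mem_support w i : (i \in support w) = (i < size w) && nth false w i.
Proof. by rewrite mem_filter mem_iota andbC. Qed.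

Lemma sorted_support w : sorted ltn (support w).
Proof. exact/(sorted_filter ltn_trans)/iota_ltn_sorted. Qed.

Lemma size_support w : size (support w) = count id w.
Proof.
by rewrite size_filter -[in RHS](mkseq_nth false w) /mkseq count_map.
Qed.

Lemma sorted_ltn_eq P Q : sorted ltn P -> sorted ltn Q -> P =i Q -> P = Q.
Proof. exact: (irr_sorted_eq ltn_trans ltnn). Qed.

Lemma indicator_support w : indicator (size w) (support w) = w.
Proof.
apply: (eq_from_nth (x0 := false)); rewrite size_indicator // => i lt_iw.
by rewrite nth_indicator mem_support lt_iw.
Qed.

Lemma support_indicator n P : sorted ltn P -> all (gtn n) P -> support (indicator n P) = P.
Proof.
move=> sorted_P /allP P_lt; apply: sorted_ltn_eq => // [|i].
  exact: sorted_support.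
rewrite mem_support nth_indicator size_indicator andbA andbb.
by case P_i: (i \in P); rewrite ?andbF // andbT; apply: P_lt.
Qed.

Lemma support_take n w : support (take n w) = [seq i <- support w | i < n].
Proof.
apply: sorted_ltn_eq; first exact: sorted_support.
  exact/(sorted_filter ltn_trans)/sorted_support.
move=> i; rewrite mem_support mem_filter mem_support size_take_min.
case: (ltnP i n) => [lt_in|le_ni] /=; first by rewrite nth_take // ltn_min lt_in.
by rewrite ltn_min ltnNge le_ni.
Qed.

Lemma support_behead w : support (behead w) = [seq i.-1 | i <- support w & 0 < i].
Proof.
case: w => [//|b w]; apply: sorted_ltn_eq; first exact: sorted_support.
  apply: (homo_sorted_in (P := [pred i | 0 < i]) (e := ltn)).
  - by move=> i j; rewrite !inE; lia.
  - exact: filter_all.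
  - exact/(sorted_filter ltn_trans)/sorted_support.
move=> i; rewrite mem_support /=; apply/idP/mapP => [i_supp|[j]].
  by exists i.+1; rewrite // mem_filter mem_support.
rewrite mem_filter mem_support => /and3P[]; case: j => // j _ lt_jw w_j /= eq_ij.
by rewrite eq_ij -ltnS lt_jw.
Qed.

Lemma support_cat s t : support (s ++ t) = support s ++ map (addn (size s)) (support t).
Proof.
apply: sorted_ltn_eq; first exact: sorted_support.
  have shift_sorted : sorted ltn (map (addn (size s)) (support t)).
    by apply: (homo_sorted (e := ltn)) (sorted_support t) => i j /=; rewrite ltn_add2l.
  rewrite !(sorted_pairwise ltn_trans) pairwise_cat -!(sorted_pairwise ltn_trans).
  rewrite sorted_support shift_sorted !andbT.
  apply/allrelP => i j; rewrite mem_support => /andP[lt_is _] /mapP[k _ ->].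
  exact: ltn_addr.
move=> i; rewrite mem_cat !mem_support size_cat nth_cat.
have [lt_is|le_si] := ltnP i (size s).
  have -> : (i \in map (addn (size s)) (support t)) = false.
    by apply/mapP => -[k _ eq_i]; move: lt_is; rewrite eq_i ltnNge leq_addr.
  by rewrite orbF ltn_addr.
rewrite /= -[i](subnKC le_si) mem_map ?mem_support; last exact: addnI.
by rewrite ltn_add2l addKn.
Qed.

Lemma support_nseq0 n : support (nseq n false) = [::].
Proof. by apply/eqP; rewrite -size_eq0 size_support count_nseq mul0n. Qed.

Definition mirror n (P : seq nat) : seq nat := rev (map (fun i => n.-1 - i) P).

Lemma support_rev w : support (rev w) = mirror (size w) (support w).
Proof.
apply: sorted_ltn_eq; first exact: sorted_support.
  rewrite /mirror rev_sorted; apply: (homo_sorted_in (P := gtn (size w)) (e := ltn)).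
  - by move=> i j; rewrite !inE; lia.
  - by apply/allP => i; rewrite mem_support => /andP[].
  - exact: sorted_support.
move=> i; rewrite mem_support size_rev /mirror mem_rev.
apply/idP/mapP => [/andP[lt_iw]|[j]]; first rewrite nth_rev //.
  by exists (size w - i.+1); rewrite ?mem_support //; lia.
rewrite mem_support => /andP[lt_jw w_j] ->.
have lt_iw : (size w).-1 - j < size w by lia.
by rewrite lt_iw nth_rev // (_ : size w - _ = j) //; lia.
Qed.

(** * Antipowers *)

Definition antipower3_at x l : bool :=
  [&& size x == 3 * l, take l x != take l (drop l x), take l x != drop (2 * l) x
    & take l (drop l x) != drop (2 * l) x].

Lemma antipower3E x : antipower3 x <-> exists l, antipower3_at x l.
Proof.
split=> [[u1 [u2 [u3 [-> [eq12 [eq23 [ne12 [ne13 ne23]]]]]]]]|[l]].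
  exists (size u1); rewrite /antipower3_at !size_cat -eq23 -eq12.
  rewrite take_size_cat // drop_size_cat // take_size_cat -?eq12 //.
  rewrite catA drop_size_cat ?size_cat; last lia.
  by apply/and4P; split; apply/eqP => //; lia.
case/and4P => /eqP size_x /eqP ne12 /eqP ne13 /eqP ne23.
exists (take l x), (take l (drop l x)), (drop (2 * l) x).
have size_drop_l : size (drop l x) = 2 * l by rewrite size_drop size_x; lia.
split; first by rewrite catA -takeD addnn -mul2n cat_take_drop.
by rewrite !size_take_min size_drop_l !size_drop size_x; do !split => //; lia.
Qed.

Definition antipower3b x : bool := antipower3_at x (size x %/ 3).

Lemma antipower3P x : reflect (antipower3 x) (antipower3b x).
Proof.
apply: (iffP idP) => [ap_x|/antipower3E[l ap_x]]; first by apply/antipower3E; exists (size x %/ 3).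
by rewrite /antipower3b (_ : size x %/ 3 = l) //; case/and4P: ap_x => /eqP ->; lia.
Qed.

Definition differ x l a b : bool :=
  has (fun i => nth false x (a + i) != nth false x (b + i)) (iota 0 l).

Lemma take_drop_neq x l a b : a + l <= size x -> b + l <= size x ->
  (take l (drop a x) != take l (drop b x)) = differ x l a b.
Proof.
move=> le_alx le_blx; rewrite /differ -[has _ _]negbK -all_predC; congr negb.
apply/eqP/allP => [eq_ab i|eq_ab].
  rewrite mem_iota => /andP[_ lt_il]; have := congr1 (nth false ^~ i) eq_ab.
  by rewrite /= !nth_take // !nth_drop => ->; rewrite negbK.
apply: (eq_from_nth (x0 := false)) => [|i]; rewrite !size_take_min !size_drop; first lia.
move=> lt_il; rewrite !nth_take ?nth_drop; try lia.
by apply/eqP/negPn/eq_ab; rewrite mem_iota; lia.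
Qed.

Lemma antipower3_atE x l : antipower3_at x l =
  [&& size x == 3 * l, differ x l 0 l, differ x l 0 (2 * l) & differ x l l (2 * l)].
Proof.
rewrite /antipower3_at; case: eqP => //= size_x.
rewrite -[in take l x](drop0 x).
rewrite -[drop (2 * l) x](@take_oversize _ l) ?size_drop ?size_x; last lia.
by rewrite !take_drop_neq ?size_x //; lia.
Qed.

Lemma size_compl w : size (compl w) = size w.
Proof. exact: size_map. Qed.

Lemma complK : involutive compl.
Proof. exact: (mapK negbK). Qed.

Lemma count_compl w : count id (compl w) = size w - count id w.
Proof. by rewrite -(count_predC id w) count_map addKn. Qed.

Lemma antipower3_compl x : antipower3 (compl x) <-> antipower3 x.
Proof.
have compl_at l : antipower3_at (compl x) l = antipower3_at x l.
  by rewrite /antipower3_at size_compl /compl -!map_drop -!map_take !(inj_eq (inj_map negb_inj)).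
by split=> /antipower3E[l ap_x]; apply/antipower3E; exists l; rewrite ?compl_at in ap_x *.
Qed.

Lemma factor_take x w n : factor x (take n w) -> factor x w.
Proof.
by move=> [p [s eq_w]]; exists p, (s ++ drop n w); rewrite -{1}(cat_take_drop n w) eq_w -!catA.
Qed.

Lemma factor_behead x w : factor x (behead w) -> factor x w.
Proof. by case: w => [|b w] [p [s /= ->]]; [exists p, s | exists (b :: p), s]. Qed.

Lemma avoids_antipower3_prefix_suffix n w : size w = n.+1 ->
  avoids_antipower3 w <->
  [/\ avoids_antipower3 (take n w), avoids_antipower3 (behead w) & ~ antipower3 w].
Proof.
move=> size_w; split=> [avoid_w|[avoid_p avoid_s not_ap] [x [[p [s eq_w]] ap_x]]].
  split=> [[x [/factor_take ? ?]]|[x [/factor_behead ? ?]]|ap_w]; apply: avoid_w; try by exists x.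
  by exists w; split=> //; exists [::], [::]; rewrite cats0.
case/lastP: s eq_w => [|s b] eq_w.
  case: p eq_w => [|b p] eq_w; first by apply: not_ap; rewrite eq_w cats0.
  by apply: avoid_s; exists x; split=> //; exists p, [::]; rewrite eq_w.
apply: avoid_p; exists x; split=> //; exists p, s.
have -> : w = (p ++ x ++ s) ++ [:: b] by rewrite eq_w -cats1 -!catA.
rewrite take_size_cat //; move: size_w; rewrite eq_w -cats1 !size_cat /=; lia.
Qed.

Definition avoids_antipower3b w : bool :=
  all (fun i => all (fun m => ~~ antipower3b (take m (drop i w))) (iota 0 (size w).+1))
      (iota 0 (size w).+1).

Lemma avoids_antipower3P w : reflect (avoids_antipower3 w) (avoids_antipower3b w).
Proof.
apply: (iffP allP) => [avoid_w [x [[p [s eq_w]] /antipower3P ap_x]]|avoid_w i _].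
  have p_in : size p \in iota 0 (size w).+1 by rewrite mem_iota eq_w !size_cat; lia.
  have x_in : size x \in iota 0 (size w).+1 by rewrite mem_iota eq_w !size_cat; lia.
  by move: (allP (avoid_w _ p_in) _ x_in); rewrite eq_w drop_size_cat // take_size_cat // ap_x.
apply/allP => m _; apply/antipower3P => ap_x; apply: avoid_w; exists (take m (drop i w)).
by split=> //; exists (take i w), (drop m (drop i w)); rewrite !cat_take_drop.
Qed.

(** * Alternating words *)

Definition alternating b n : word := mkseq (fun i => b (+) odd i) n.
Arguments alternating : simpl never.

Lemma size_alternating b n : size (alternating b n) = n.
Proof. exact: size_mkseq. Qed.

Lemma nth_alternating b n i : i < n -> nth false (alternating b n) i = b (+) odd i.
Proof. exact: nth_mkseq. Qed.

Lemma alternatingS b n : alternating b n.+1 = b :: alternating (~~ b) n.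
Proof.
rewrite /alternating /mkseq /= addbF (iotaDl 1 0 n) -map_comp.
by congr (_ :: _); apply: eq_map => i /=; rewrite addNb addbN.
Qed.

Lemma count_alternating b n : count id (alternating b n) = (n + b) %/ 2.
Proof. by elim: n b => [|n IHn] [|]; rewrite // alternatingS /= IHn; lia. Qed.

Lemma take_alternating b n : take n (alternating b n.+1) = alternating b n.
Proof. by elim: n b => [|n IHn] b; rewrite // alternatingS [in RHS]alternatingS /= IHn. Qed.

Lemma compl_alternating b n : compl (alternating b n) = alternating (~~ b) n.
Proof. by elim: n b => [|n IHn] b; rewrite // !alternatingS /= IHn. Qed.

Lemma rev_alternating b n : rev (alternating b n) = alternating (b (+) odd n.-1) n.
Proof.
apply: (eq_from_nth (x0 := false)); rewrite size_rev !size_alternating // => i lt_in.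
by rewrite nth_rev size_alternating // !nth_alternating; lia.
Qed.

Lemma alternating_glue b c n w : 1 < n ->
  take n w = alternating b n -> behead w = alternating c n -> w = alternating b n.+1.
Proof.
move=> n_gt1 eq_take; case: w eq_take => [|d w] eq_take /= eq_w.
  by have := congr1 size eq_take; rewrite /= size_alternating; lia.
have nth_w i : i < n -> nth false (d :: w) i = b (+) odd i.
  by move=> lt_in; rewrite -(nth_take _ lt_in) eq_take nth_alternating.
have d_eq : d = b by rewrite -[b]addbF; apply: (nth_w 0); lia.
have c_eq : c = ~~ b.
  by rewrite -[c]addbF -addbT -(nth_alternating c (ltnW n_gt1)) -eq_w; apply: (nth_w 1).
by rewrite alternatingS d_eq eq_w c_eq.
Qed.

Lemma alternating_not_antipower3 b n : ~ antipower3 (alternating b n).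
Proof.
move=> /antipower3E[l]; rewrite antipower3_atE size_alternating => /and4P[/eqP eq_n _ + _].
case/hasP => i; rewrite mem_iota => lt_il.
by rewrite !nth_alternating; lia.
Qed.

(** * Sparse supports *)

(* For n >= 8, the supports of the words of [Cl n L] with at most three 1s,
   where L is the language of Corollary 5 selected by [n %% 3]. *)
Definition sparse_support n Q : Prop :=
  Q = [::] \/ (exists2 a, a < n & Q = [:: a]) \/
  Q = [:: n - 2; n - 1] \/ Q = [:: n - 3; n - 1] \/ Q = [:: 0; 1] \/ Q = [:: 0; 2] \/
  (n %% 3 != 0 /\ Q = [:: 0; n - 1]) \/
  (n %% 3 = 2 /\ (Q = [:: 0; n - 2] \/ Q = [:: 1; n - 1] \/
                  Q = [:: 0; n - 2; n - 1] \/ Q = [:: 0; 1; n - 1])).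

Definition sparse_supports n : seq (seq nat) :=
  [::] :: [seq [:: a] | a <- iota 0 n] ++
  [:: [:: n - 2; n - 1]; [:: n - 3; n - 1]; [:: 0; 1]; [:: 0; 2]] ++
  (if n %% 3 == 0 then [::] else [:: [:: 0; n - 1]]) ++
  (if n %% 3 == 2
   then [:: [:: 0; n - 2]; [:: 1; n - 1]; [:: 0; n - 2; n - 1]; [:: 0; 1; n - 1]]
   else [::]).

Ltac decompose_hyps := repeat match goal with
  | H : _ \/ _ |- _ => destruct H
  | H : _ /\ _ |- _ => destruct H
  | H : exists2 _, _ & _ |- _ => destruct H
  | H : exists _, _ |- _ => destruct H
  | H : _ :: _ = _ :: _ |- _ => injection H; clear H; intros
  | H : [::] = _ :: _ |- _ => discriminate H
  | H : _ :: _ = [::] |- _ => discriminate H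
  end.

Ltac list_eq := solve [repeat match goal with
  | |- _ :: _ = _ :: _ => refine (f_equal2 cons _ _); [first [reflexivity | lia] |]
  | |- [::] = [::] => reflexivity
  end].

Ltac disjunct tac := first [solve [left; tac] | right; disjunct tac | solve [tac]].

Ltac prove_sparse_support := rewrite /sparse_support; disjunct
  ltac:(first [list_eq | eexists; [|list_eq]; lia | split; [lia | disjunct list_eq]]).

Ltac mod3_cases n := have [|[|]] : n %% 3 = 0 \/ n %% 3 = 1 \/ n %% 3 = 2 by lia.

Lemma sparse_supportsP n Q : reflect (sparse_support n Q) (Q \in sparse_supports n).
Proof.
apply: (iffP idP); rewrite /sparse_supports in_cons !mem_cat.
  case/or4P => [|/mapP[a] | | /orP[]]; rewrite ?inE.
  - by move/eqP ->; prove_sparse_support.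
  - by rewrite mem_iota => lt_an ->; prove_sparse_support.
  - by case/or4P => /eqP ->; prove_sparse_support.
  - by case: ifP => // mod_n; rewrite inE => /eqP ->; prove_sparse_support.
  - by case: ifP => // mod_n; rewrite !inE => /or4P[] /eqP ->; prove_sparse_support.
rewrite /sparse_support => Q_sparse; decompose_hyps; subst Q.
all: try by rewrite map_f ?orbT // mem_iota.
all: by mod3_cases n => mod_n; rewrite mod_n /= ?inE ?eqxx ?orbT //; lia.
Qed.

Lemma size_sparse_supports n :
  size (sparse_supports n) = n + 5 + (n %% 3 != 0) + 4 * (n %% 3 == 2).
Proof.
by rewrite /sparse_supports /= !size_cat size_map size_iota; do 2 case: ifP => _ /=; lia.
Qed.

Lemma sparse_support_sorted n Q : 3 <= n -> sparse_support n Q ->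
  sorted ltn Q /\ all (gtn n) Q.
Proof. by rewrite /sparse_support => n_ge3 Q_sparse; decompose_hyps; subst Q => /=; lia. Qed.

Lemma sparse_support_size n Q : sparse_support n Q -> size Q <= 3.
Proof. by rewrite /sparse_support => Q_sparse; decompose_hyps; subst Q. Qed.

Lemma sparse_support_mirror n Q : 4 <= n -> sparse_support n Q -> sparse_support n (mirror n Q).
Proof.
rewrite /sparse_support => n_ge4 Q_sparse; decompose_hyps; subst Q; rewrite /mirror /rev /=.
all: by mod3_cases n => mod_n; prove_sparse_support.
Qed.

Lemma uniq_sparse_supports n : 5 <= n -> uniq (sparse_supports n).
Proof.
move=> n_ge5; have single_inj : injective (fun a : nat => [:: a]) by move=> a b [].
have not_single Q : size Q != 1 -> (Q \in [seq [:: a] | a <- iota 0 n]) = false.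
  by move=> size_Q; apply/mapP => -[a _ eq_Q]; rewrite eq_Q in size_Q.
rewrite /sparse_supports; mod3_cases n => mod_n; rewrite mod_n /= mem_cat cat_uniq.
all: rewrite (map_inj_uniq single_inj) iota_uniq /= !not_single //= !inE -!eqseqE /=; lia.
Qed.

Definition support_differ P l a b : bool :=
  has (fun i => (a + i \in P) != (b + i \in P)) (iota 0 l).

Definition antipower3_support N P : Prop := exists l, N = 3 * l /\
  [&& support_differ P l 0 l, support_differ P l 0 (2 * l) & support_differ P l l (2 * l)].

Definition within_third l P : Prop :=
  exists2 j, j < 3 & all (fun i => j * l <= i < j * l + l) P.

Ltac differ_at i := exists i; [rewrite mem_iota; lia | rewrite !inE; lia].

Ltac prove_support_differ l := apply/hasP; first
  [ differ_at 0 | differ_at 1 | differ_at 2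
  | differ_at (l - 1) | differ_at (l - 2) | differ_at (l - 3) ].

Ltac prove_antipower3_support N := exists (N %/ 3); split;
  [lia | apply/and3P; split; prove_support_differ (N %/ 3)].

(* P has at most four elements: the prefix support drops at most one of them
   and has at most three. *)
Lemma sparse_support_extend n P : 12 <= n -> sorted ltn P -> all (geq n) P ->
  sparse_support n [seq i <- P | i < n] -> sparse_support n [seq i.-1 | i <- P & 0 < i] ->
  sparse_support n.+1 P \/ antipower3_support n.+1 P.
Proof.
move=> n_ge12.
case: P => [|a [|b [|c [|d [|e P]]]]] /= sorted_P le_Pn;
  repeat (case: ifP => ?; try (exfalso; lia)); rewrite /sparse_support /= => prefix suffix;
  decompose_hyps; try (exfalso; lia); subst; mod3_cases n => mod_n;
  first [left; prove_sparse_support | right; prove_antipower3_support n.+1].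
Qed.

Lemma sparse_support_restrict n P : 12 <= n -> sparse_support n.+1 P ->
  [/\ sparse_support n [seq i <- P | i < n], sparse_support n [seq i.-1 | i <- P & 0 < i] &
      forall l, n.+1 = 3 * l -> within_third l P].
Proof.
rewrite /sparse_support => n_ge12 P_sparse; decompose_hyps; subst P => /=;
  repeat (case: ifP => ?; try (exfalso; lia)); rewrite /= /within_third.
all: mod3_cases n => mod_n; (split; [prove_sparse_support | prove_sparse_support |]);
  move=> l eq_n; first [ exfalso; lia
                       | exists 0; [done | rewrite /= ?andbT; lia]
                       | exists 1; [done | rewrite /= ?andbT; lia]
                       | exists 2; [done | rewrite /= ?andbT; lia]
                       | match goal with |- context [ [:: ?x] ] =>
                           (have [?|[?|?]] : x < l \/ l <= x < 2 * l \/ 2 * l <= x by lia);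
                           [exists 0 | exists 1 | exists 2]; rewrite /= ?andbT; lia end ].
Qed.

Lemma differ_indicator N P l a b : a + l <= N -> b + l <= N ->
  differ (indicator N P) l a b = support_differ P l a b.
Proof.
move=> le_alN le_blN; apply: eq_in_has => i; rewrite mem_iota => /andP[_ lt_il].
have lt_aiN : a + i < N by lia.
have lt_biN : b + i < N by lia.
by rewrite !nth_indicator lt_aiN lt_biN.
Qed.

Lemma antipower3_indicator N P : antipower3_support N P -> antipower3 (indicator N P).
Proof.
case=> l [eq_N diffs]; apply/antipower3E; exists l; rewrite antipower3_atE size_indicator.
by rewrite !differ_indicator ?diffs ?eq_N ?eqxx //; lia.
Qed.

Lemma indicator_not_antipower3 N P :
  (forall l, N = 3 * l -> within_third l P) -> ~ antipower3 (indicator N P).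
Proof.
move=> third /antipower3E[l]; rewrite antipower3_atE size_indicator => /and4P[/eqP eq_N].
have [j lt_j3 /allP P_third] := third l eq_N.
have no_diff a b : {in P, forall i, ~~ (a <= i < a + l) && ~~ (b <= i < b + l)} ->
    ~~ support_differ P l a b.
  move=> outside; apply/hasPn => i; rewrite mem_iota => /andP[_ lt_il].
  have [/outside|_] := boolP (a + i \in P); first lia.
  by have [/outside|_] := boolP (b + i \in P); first lia.
rewrite !differ_indicator; try lia.
case: j lt_j3 P_third => [|[|[|]]] // _ P_third.
- by move=> _ _; apply/negP/no_diff => i /P_third; lia.
- by move=> _ + _; apply/negP/no_diff => i /P_third; lia.
- by move=> + _ _; apply/negP/no_diff => i /P_third; lia.
Qed.

(** * Candidates *)

Definition candidate n w : bool :=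
  [|| w == alternating false n, w == alternating true n,
      support w \in sparse_supports n | support (compl w) \in sparse_supports n].

Lemma candidate_alternating b n : candidate n (alternating b n).
Proof. by case: b; rewrite /candidate eqxx ?orbT. Qed.

Lemma candidate_compl n w : candidate n (compl w) = candidate n w.
Proof.
have compl_alt b : (compl w == alternating b n) = (w == alternating (~~ b) n).
  by rewrite -(inj_eq (can_inj complK)) complK compl_alternating.
rewrite /candidate complK !compl_alt /=.
by case: (w == _); case: (w == _); case: (_ \in _); case: (_ \in _).
Qed.

Lemma count_sparse n w : support w \in sparse_supports n -> count id w <= 3.
Proof. by rewrite -size_support => /sparse_supportsP/sparse_support_size. Qed.

Lemma count_take_behead n w : size w = n.+1 ->
  count id (take n w) <= (count id (behead w)).+1 /\
  count id (behead w) <= (count id (take n w)).+1.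
Proof.
move=> size_w; have := count_size id (drop n w); rewrite size_drop size_w subSnn.
have := congr1 (count id) (cat_take_drop n w); rewrite count_cat.
by case: w size_w => [|[] w] //= _; lia.
Qed.

Lemma sparse_extend n w : 12 <= n -> size w = n.+1 ->
  support (take n w) \in sparse_supports n -> support (behead w) \in sparse_supports n ->
  support w \in sparse_supports n.+1 \/ antipower3 w.
Proof.
move=> n_ge12 size_w; rewrite support_take support_behead.
move=> /sparse_supportsP sp_p /sparse_supportsP sp_s.
have le_wn : all (geq n) (support w).
  by apply/allP => i; rewrite mem_support size_w => /andP[].
case: (sparse_support_extend n_ge12 (sorted_support w) le_wn sp_p sp_s) => [/sparse_supportsP|ap_w].
  by left.
by right; rewrite -(indicator_support w) size_w; apply: antipower3_indicator.
Qed.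

Lemma sparse_restrict n w : 12 <= n -> size w = n.+1 -> support w \in sparse_supports n.+1 ->
  [/\ support (take n w) \in sparse_supports n, support (behead w) \in sparse_supports n
    & ~ antipower3 w].
Proof.
move=> n_ge12 size_w /sparse_supportsP /(sparse_support_restrict n_ge12)[sp_p sp_s third].
rewrite support_take support_behead; split; try exact/sparse_supportsP.
by rewrite -(indicator_support w) size_w; apply: indicator_not_antipower3.
Qed.

Lemma take_compl n w : take n (compl w) = compl (take n w).
Proof. by rewrite /compl map_take. Qed.

Lemma behead_compl w : behead (compl w) = compl (behead w).
Proof. exact: behead_map. Qed.

Lemma candidate_extend n w : 12 <= n -> size w = n.+1 ->
  candidate n (take n w) -> candidate n (behead w) -> candidate n.+1 w \/ antipower3 w.
Proof.
move=> n_ge12 size_w; have [le_ps le_sp] := count_take_behead size_w.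
have size_p : size (take n w) = n by rewrite size_takel // size_w.
have size_s : size (behead w) = n by rewrite size_behead size_w.
have count_co x : size x = n -> support (compl x) \in sparse_supports n -> n - 3 <= count id x.
  by move=> size_x /count_sparse; rewrite count_compl size_x; lia.
move=> /or4P[/eqP p_alt|/eqP p_alt|p_sp|p_co] /or4P[/eqP s_alt|/eqP s_alt|s_sp|s_co].
all: rewrite ?p_alt ?s_alt ?count_alternating /= ?addn0 ?addn1 in le_ps le_sp.
all: try have := count_sparse p_sp; try have := count_sparse s_sp.
all: try have := count_co _ size_p p_co; try have := count_co _ size_s s_co.
(* Alternating words have about n/2 ones, sparse ones at most 3 and cosparse
   ones at least n - 3, while prefix and suffix counts differ by at most 1. *)
all: move=> *; try (exfalso; lia).
1-4: by left; rewrite (alternating_glue _ p_alt s_alt) ?candidate_alternating //; lia.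
- case: (sparse_extend n_ge12 size_w p_sp s_sp) => [sp_w|]; last by right.
  by left; rewrite /candidate sp_w !orbT.
rewrite -take_compl in p_co; rewrite -behead_compl in s_co.
have size_cw : size (compl w) = n.+1 by rewrite size_compl.
case: (sparse_extend n_ge12 size_cw p_co s_co) => [sp_cw|/antipower3_compl]; last by right.
by left; rewrite /candidate sp_cw !orbT.
Qed.

Lemma candidate_restrict n w : 12 <= n -> size w = n.+1 -> candidate n.+1 w ->
  [/\ candidate n (take n w), candidate n (behead w) & ~ antipower3 w].
Proof.
move=> n_ge12 size_w /or4P[/eqP->|/eqP->|sp_w|sp_cw].
1,2: split; [by rewrite take_alternating candidate_alternating
            | by rewrite alternatingS candidate_alternating
            | exact: alternating_not_antipower3].
- have [sp_p sp_s not_ap] := sparse_restrict n_ge12 size_w sp_w.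
  by split; rewrite // /candidate ?sp_p ?sp_s !orbT.
have size_cw : size (compl w) = n.+1 by rewrite size_compl.
have [sp_p sp_s not_ap] := sparse_restrict n_ge12 size_cw sp_cw.
rewrite take_compl behead_compl in sp_p sp_s.
by split; [rewrite /candidate sp_p !orbT | rewrite /candidate sp_s !orbT | move/antipower3_compl].
Qed.

Fixpoint words n : seq word :=
  if n is m.+1 then [seq b :: w | b <- [:: false; true], w <- words m] else [:: [::]].

Lemma mem_words w : w \in words (size w).
Proof.
elim: w => [|b w IHw] //=; have cons_inj (c : bool) : injective (cons c) by move=> ? ? [].
by rewrite !mem_cat; case: b; rewrite (mem_map (cons_inj _)) IHw ?orbT.
Qed.

Lemma candidate12_check : all (fun w => avoids_antipower3b w == candidate 12 w) (words 12).
Proof. by vm_compute. Qed.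

Lemma avoids_antipower3_candidate n w : 12 <= n -> size w = n ->
  avoids_antipower3 w <-> candidate n w.
Proof.
elim: n w => [//|n IHn] w n_ge size_w.
have [n_eq11|n_ge12] : n = 11 \/ 12 <= n by lia.
  subst n; have w_in : w \in words 12 by rewrite -size_w mem_words.
  by have /eqP <- := allP candidate12_check w w_in; split=> /avoids_antipower3P.
have size_p : size (take n w) = n by rewrite size_takel // size_w.
have size_s : size (behead w) = n by rewrite size_behead size_w.
have [IHp IHs] := (IHn _ n_ge12 size_p, IHn _ n_ge12 size_s).
split=> [/(avoids_antipower3_prefix_suffix size_w)[/IHp cand_p /IHs cand_s not_ap]|cand_w].
  by case: (candidate_extend n_ge12 size_w cand_p cand_s).
have [/IHp avoid_p /IHs avoid_s not_ap] := candidate_restrict n_ge12 size_w cand_w.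
exact/(avoids_antipower3_prefix_suffix size_w).
Qed.

(** * The languages of Corollary 5 *)

Definition L_of n : word -> Prop :=
  match n %% 3 with 0 => L0 | 1 => L1 | _ => L2 end.

Lemma L0_L_of n u : L0 u -> L_of n u.
Proof. by rewrite /L_of => L0_u; case: (n %% 3) => [|[|?]]; [| left | left; left]. Qed.

Lemma L_10star1_L_of n u : n %% 3 != 0 -> L_10star1 u -> L_of n u.
Proof. by rewrite /L_of => + L_u; case: (n %% 3) => [|[|?]] // _; [right | left; right]. Qed.

Lemma L2_L_of n u : n %% 3 = 2 -> L_10star10 u \/ L_10star11 u -> L_of n u.
Proof. by rewrite /L_of => ->; right. Qed.

Lemma flatten_nseq01 m : flatten (nseq m [:: false; true]) = alternating false m.*2.
Proof. by elim: m => [//|m IHm]; rewrite doubleS !alternatingS /= IHm. Qed.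

Lemma flatten_nseq01_cat0 m :
  flatten (nseq m [:: false; true]) ++ [:: false] = alternating false m.*2.+1.
Proof. by elim: m => [//|m IHm]; rewrite doubleS alternatingS (alternatingS true) /= IHm. Qed.

Lemma L0_alternating n : L0 (alternating false n).
Proof.
rewrite -[n]odd_double_half; case: (odd n) => /=.
  by right; right; left; exists n./2; rewrite flatten_nseq01_cat0.
by right; left; exists n./2; rewrite flatten_nseq01.
Qed.

Lemma support_cons b w :
  support (b :: w) = (if b then [:: 0] else [::]) ++ map succn (support w).
Proof. by rewrite -cat1s support_cat; case: b. Qed.

Lemma candidate_L_of n u : size u = n -> L_of n u -> candidate n u.
Proof.
move=> size_u; have sparse_u : sparse_support n (support u) -> candidate n u.
  by move/sparse_supportsP => sp_u; rewrite /candidate sp_u !orbT.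
have alt_u m : u = alternating false m -> candidate n u.
  by move=> eq_u; move: size_u; rewrite eq_u size_alternating => <-; apply: candidate_alternating.
rewrite /L_of; mod3_cases n => mod_n; rewrite mod_n /L2 /L1 /L0.
all: rewrite /L_0star /L_01star /L_01star0 /L_0star10star /L_0star011 /L_0star101.
all: rewrite ?/L_10star1 ?/L_10star10 ?/L_10star11 => L_u; decompose_hyps; subst u.
all: try by apply: alt_u; rewrite ?flatten_nseq01_cat0 ?flatten_nseq01.
all: apply: sparse_u; move: size_u; rewrite /= ?(size_cat, size_nseq) /= => size_u.
all: rewrite ?(support_cat, support_cons, support_nseq0, size_nseq) /=; prove_sparse_support.
Qed.

Lemma sparse_supports_rev n w : 4 <= n -> size w = n ->
  support w \in sparse_supports n -> support (rev w) \in sparse_supports n.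
Proof.
move=> n_ge4 size_w /sparse_supportsP sp_w; apply/sparse_supportsP.
by rewrite support_rev size_w; apply: sparse_support_mirror.
Qed.

Lemma candidate_rev n w : 4 <= n -> size w = n -> candidate n w -> candidate n (rev w).
Proof.
move=> n_ge4 size_w /or4P[/eqP->|/eqP->|sp_w|sp_cw].
1,2: by rewrite rev_alternating candidate_alternating.
  by rewrite /candidate (sparse_supports_rev n_ge4 size_w sp_w) !orbT.
have size_cw : size (compl w) = n by rewrite size_compl.
by rewrite /candidate /compl map_rev (sparse_supports_rev n_ge4 size_cw sp_cw) !orbT.
Qed.

Lemma Cl_candidate n w : 4 <= n -> Cl n (L_of n) w -> size w = n /\ candidate n w.
Proof.
move=> n_ge4 [u [size_u /(candidate_L_of size_u) cand_u eq_w]].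
have cand_cu : candidate n (compl u) by rewrite candidate_compl.
case: eq_w => [|[|[|]]] ->; rewrite ?size_compl ?size_rev //.
  by split=> //; apply: candidate_rev.
by split=> //; rewrite candidate_compl; apply: candidate_rev.
Qed.

Lemma Cl_compl n L w : Cl n L w -> Cl n L (compl w).
Proof.
case=> u [size_u L_u eq_w]; exists u; split=> //.
by case: eq_w => [|[|[|]]] ->; rewrite ?complK; tauto.
Qed.

Lemma Cl_sparse n L u Q : size u = n -> L u ->
  support u = Q \/ mirror n (support u) = Q -> Cl n L (indicator n Q).
Proof.
move=> size_u L_u [<-|<-]; exists u; split=> //; first by left; rewrite -size_u indicator_support.
by right; right; left; rewrite -size_u -support_rev -(size_rev u) indicator_support.
Qed.

Ltac Cl_by u := apply: (@Cl_sparse _ _ u);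
  [ rewrite ?(size_cat, size_nseq) /= ?(size_cat, size_nseq) /=; lia
  |
  | rewrite /mirror /rev ?(support_cat, support_cons, support_nseq0, size_nseq) /=;
    first [left; list_eq | right; list_eq] ].

Lemma Cl_sparse_supports n Q : 4 <= n -> Q \in sparse_supports n ->
  Cl n (L_of n) (indicator n Q).
Proof.
move=> n_ge4 /sparse_supportsP; rewrite /sparse_support => sp_Q; decompose_hyps; subst Q.
- Cl_by (nseq n false); apply/L0_L_of; left; by exists n.
- Cl_by (nseq x false ++ true :: nseq (n - x.+1) false).
  by apply/L0_L_of; do 3 right; left; exists x, (n - x.+1).
- Cl_by (nseq (n - 3) false ++ [:: false; true; true]).
  by apply/L0_L_of; do 4 right; left; exists (n - 3).
- Cl_by (nseq (n - 3) false ++ [:: true; false; true]).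
  by apply/L0_L_of; do 5 right; exists (n - 3).
- Cl_by (nseq (n - 3) false ++ [:: false; true; true]).
  by apply/L0_L_of; do 4 right; left; exists (n - 3).
- Cl_by (nseq (n - 3) false ++ [:: true; false; true]).
  by apply/L0_L_of; do 5 right; exists (n - 3).
- Cl_by (true :: nseq (n - 2) false ++ [:: true]).
  by apply: L_10star1_L_of => //; exists (n - 2).
- Cl_by (true :: nseq (n - 3) false ++ [:: true; false]).
  by apply: L2_L_of => //; left; exists (n - 3).
- Cl_by (true :: nseq (n - 3) false ++ [:: true; false]).
  by apply: L2_L_of => //; left; exists (n - 3).
- Cl_by (true :: nseq (n - 3) false ++ [:: true; true]).
  by apply: L2_L_of => //; right; exists (n - 3).
- Cl_by (true :: nseq (n - 3) false ++ [:: true; true]).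
  by apply: L2_L_of => //; right; exists (n - 3).
Qed.

Lemma candidate_Cl n w : 4 <= n -> size w = n -> candidate n w -> Cl n (L_of n) w.
Proof.
move=> n_ge4 size_w /or4P[/eqP->|/eqP->|sp_w|sp_cw].
1,2: exists (alternating false n);
       split; [exact: size_alternating | exact/L0_L_of/L0_alternating |].
- by left.
- by right; left; rewrite compl_alternating.
- by rewrite -(indicator_support w) size_w; apply: Cl_sparse_supports.
rewrite -(complK w); apply: Cl_compl.
by rewrite -(indicator_support (compl w)) size_compl size_w; apply: Cl_sparse_supports.
Qed.

(** * Counting *)

Definition candidates n : seq word :=
  [:: alternating false n; alternating true n] ++
  [seq indicator n Q | Q <- sparse_supports n] ++
  [seq compl (indicator n Q) | Q <- sparse_supports n].

Lemma support_indicator_sparse n Q : 3 <= n -> Q \in sparse_supports n ->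
  support (indicator n Q) = Q.
Proof.
move=> n_ge3 /sparse_supportsP/(sparse_support_sorted n_ge3)[sorted_Q lt_Q].
exact: support_indicator.
Qed.

Lemma mem_candidates n w : 3 <= n -> (w \in candidates n) = (size w == n) && candidate n w.
Proof.
move=> n_ge3; apply/idP/andP => [|[/eqP size_w]].
  rewrite mem_cat => /orP[|]; first by rewrite mem_seq2 => /orP[]/eqP->;
    rewrite size_alternating candidate_alternating.
  rewrite mem_cat => /orP[]/mapP[Q sp_Q ->]; rewrite ?size_compl size_indicator ?candidate_compl.
  1,2: by rewrite /candidate support_indicator_sparse // sp_Q !orbT.
rewrite !mem_cat mem_seq2.
case/or4P => [/eqP->|/eqP->|sp_w|sp_cw]; rewrite ?eqxx ?orbT //; apply/orP; right; apply/orP.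
  by left; apply/mapP; exists (support w); rewrite // -size_w indicator_support.
right; apply/mapP; exists (support (compl w)) => //.
by rewrite -size_w -(size_compl w) indicator_support complK.
Qed.

Lemma uniq_candidates n : 12 <= n -> uniq (candidates n).
Proof.
move=> n_ge12; have n_ge3 : 3 <= n by lia.
have count_ind Q : Q \in sparse_supports n -> count id (indicator n Q) <= 3.
  by move=> sp_Q; apply: (count_sparse (n := n)); rewrite support_indicator_sparse.
have count_cind Q : Q \in sparse_supports n -> n - 3 <= count id (compl (indicator n Q)).
  by move=> sp_Q; have := count_ind Q sp_Q; rewrite count_compl size_indicator; lia.
have ind_inj : {in sparse_supports n &, injective (indicator n)}.
  by move=> P Q sp_P sp_Q /(congr1 support); rewrite !support_indicator_sparse.
have count_alt b := count_alternating b n.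
rewrite /candidates cat_uniq; apply/and3P; split.
- rewrite /= mem_seq1 ?andbT; apply/eqP => /(congr1 (nth false ^~ 0)).
  by rewrite !nth_alternating //; lia.
- apply/hasPn => x; rewrite mem_cat mem_seq2 => /orP[] /mapP[Q sp_Q ->];
    apply/negP => /orP[] /eqP /(congr1 (count id));
    move: (count_alt false) (count_alt true) (count_ind Q sp_Q) (count_cind Q sp_Q) => /=; lia.
have cind_inj : {in sparse_supports n &, injective (fun Q => compl (indicator n Q))}.
  by move=> P Q sp_P sp_Q /(can_inj complK); apply: ind_inj.
rewrite cat_uniq (map_inj_in_uniq ind_inj) (map_inj_in_uniq cind_inj) uniq_sparse_supports.
  rewrite andbT; apply/hasPn => x /mapP[P sp_P ->]; apply/mapP => -[Q sp_Q /(congr1 (count id))].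
  by move: (count_ind Q sp_Q) (count_cind P sp_P); lia.
lia.
Qed.

Lemma has_card_A n : 12 <= n -> has_card (A n) (size (sparse_supports n)).*2.+2.
Proof.
move=> n_ge12; exists (candidates n); split.
- exact: uniq_candidates.
- by rewrite /candidates !size_cat !size_map -addnn.
move=> w; rewrite mem_candidates; last lia.
split=> [/andP[/eqP size_w cand_w]|[size_w /(avoids_antipower3_candidate n_ge12 size_w) ->]].
  by split=> //; apply/(avoids_antipower3_candidate n_ge12 size_w).
by rewrite size_w eqxx.
Qed.

Lemma A_Cl n w : 12 <= n -> A n w <-> Cl n (L_of n) w.
Proof.
move=> n_ge12; split=> [[size_w /(avoids_antipower3_candidate n_ge12 size_w) cand_w]|].
  by apply: candidate_Cl size_w cand_w; lia.
move=> /Cl_candidate[|size_w cand_w]; first lia.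
by split=> //; apply/(avoids_antipower3_candidate n_ge12 size_w).
Qed.

Theorem corollary5 (k : nat) : 6 <= k ->
  (forall w, A (3 * k) w <-> Cl (3 * k) L0 w) /\
      (forall w, A (3 * k + 1) w <-> Cl (3 * k + 1) L1 w) /\
      (forall w, A (3 * k + 2) w <-> Cl (3 * k + 2) L2 w) /\
      has_card (A (3 * k)) (6 * k + 12) /\
      has_card (A (3 * k + 1)) (6 * k + 16) /\
      has_card (A (3 * k + 2)) (6 * k + 26).
Proof.
move=> k_ge6.
have mod0 : (3 * k) %% 3 = 0 by lia.
have mod1 : (3 * k + 1) %% 3 = 1 by lia.
have mod2 : (3 * k + 2) %% 3 = 2 by lia.
have card n N : 12 <= n -> N = (size (sparse_supports n)).*2.+2 -> has_card (A n) N.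
  by move=> n_ge12 ->; apply: has_card_A.
split; first by move=> w; have := @A_Cl (3 * k) w; rewrite /L_of mod0; apply; lia.
split; first by move=> w; have := @A_Cl (3 * k + 1) w; rewrite /L_of mod1; apply; lia.
split; first by move=> w; have := @A_Cl (3 * k + 2) w; rewrite /L_of mod2; apply; lia.
by do ?split; apply: card; rewrite ?size_sparse_supports ?mod0 ?mod1 ?mod2 /=; lia.
Qed.
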